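(* Let $\{\tau_n\}_{n\ge1}$ be a nonnegative sequence and $\{a_n\}_{n\ge1}$ a non-decreasing strictly positive sequence. Suppose there are finite real constants $\theta\ge1$, $C>0$ and $N\ge2$ such that for all $n\ge N$, $$\frac{a_n^{2\theta}}{n^{\theta-1}}\sum_{k=n}^\infty\frac{k^\theta\tau_k}{a_k^{2\theta}}\le C\sum_{k=1}^{n-1}k\tau_k,$$ and $$\liminf_{n\to\infty}\inf_{k\ge n}\frac{a_k^2}{ka_n^2}\sum_{j=1}^{n-1}j\tau_j>0.$$ Then every random variable $X_1$ satisfying $\sum_{n=1}^\infty n\tau_nP(|X_1|\ge\varepsilon a_n)<\infty$ for all $\varepsilon>0$ also satisfies $\sum_{n=1}^\infty\tau_n e^{-\varepsilon^2a_n^2/(nT_{\varepsilon,n})}<\infty$ for all $\varepsilon>0$, where $T_{\varepsilon,n}=E[X_1^21_{\{|X_1|<\varepsilon a_n\}}]$ and $e^{-t/0}=0$ for $t>0$.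
   Context: ''Positive'' means nonnegative; ''increasing'' means non-decreasing. *)

From HB Require Import structures.
From mathcomp Require Import all_boot all_order all_algebra.
From mathcomp Require Import all_classical all_reals all_analysis.
Set Implicit Arguments. Unset Strict Implicit. Unset Printing Implicit Defensive.
Import Order.TTheory GRing.Theory Num.Theory.
Local Open Scope ring_scope.

Definition exp_neg_div {R : realType} (t s : R) : R :=
  if s == 0 then 0 else expR (- (t / s)).

From HB Require Import structures.
From mathcomp Require Import all_boot all_order all_algebra.
From mathcomp Require Import all_classical all_reals all_analysis measurable_realfun.
From mathcomp Require Import ring lra.
Import Order.TTheory GRing.Theory Num.Theory.
Set Implicit Arguments. Unset Strict Implicit. Unset Printing Implicit Defensive.
Local Open Scope classical_set_scope.
Local Open Scope ring_scope.

(* Put b_n = eps a_n, T_n = E[X^2; |X| < b_n] and G_n = P(|X| >= b_n); both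
   hypotheses on (a_n) are invariant under scaling, so they hold for (b_n).
   Raising the truncation level from b_k to b_(k+1) increases T by at most
   b_(k+1)^2 (G_k - G_(k+1)).  Weighting these increments by the growth
   condition and summing by parts against sum_n n tau_n G_n < oo gives
   n T_n = O(b_n^2).  Since e^(-1/y) <= (theta y)^theta, the n-th term of the
   series is at most theta^theta n^theta tau_n T_n^theta / b_n^(2 theta).
   Expanding T_n^theta along the increments of T (by convexity of
   t |-> t^theta) and exchanging the order of summation, the tail condition
   bounds the series by a multiple of sum_k S_(k+1) (G_k - G_(k+1)), where
   S_k = sum_(j<k) j tau_j, which the same summation by parts controls. *)

Section power_inequalities.
Variable R : realType.
Implicit Types x y s t th : R.

Lemma powRV x th : 0 < x -> (x^-1) `^ th = (x `^ th)^-1.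
Proof.
move=> x_gt0; apply: (mulIf (lt0r_neq0 (powR_gt0 th x_gt0))).
by rewrite -powRM ?invr_ge0 ?ltW // mulVf ?gt_eqF // powR1 mulVf ?gt_eqF ?powR_gt0.
Qed.

Lemma powR_sqr x th : 0 <= x -> (x ^+ 2) `^ th = x `^ (2 * th).
Proof. by move=> x_ge0; rewrite powRrM -powR_mulrn. Qed.

Lemma powR_sub_le th x y : 1 <= th -> 0 <= y -> y <= x ->
  x `^ th - y `^ th <= th * x `^ (th - 1) * (x - y).
Proof.
move=> th_ge1 y_ge0 yx; have x_ge0 := le_trans y_ge0 yx.
have th_gt0 : 0 < th by apply: lt_le_trans th_ge1.
have [->|th_neq1] := eqVneq th 1; first by rewrite subrr powRr0 !powRr1 // !mul1r.
have th1_gt0 : 0 < th - 1 by rewrite subr_gt0 lt_neqAle eq_sym th_neq1.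
pose q := th / (th - 1).
have conj_q : th^-1 + q^-1 = 1.
  by rewrite invf_div; field; rewrite gt_eqF.
(* Young's inequality for [y * x^(th-1)] with the conjugate exponents [th] and [q] *)
have := conjugate_powR y_ge0 (powR_ge0 x (th - 1)) th_gt0 (divr_gt0 th_gt0 th1_gt0) conj_q.
have -> : (x `^ (th - 1)) `^ q = x `^ th by rewrite -powRrM /q mulrC divfK ?gt_eqF.
rewrite /q invf_div => young.
have xth : x `^ th = x * x `^ (th - 1) by rewrite mulr_powRB1.
have -> : th * x `^ (th - 1) * (x - y) = th * x `^ th - th * (y * x `^ (th - 1)).
  by rewrite xth; ring.
have : th * (y * x `^ (th - 1)) <= y `^ th + (th - 1) * x `^ th.
  apply: le_trans (ler_wpM2l (ltW th_gt0) young) _.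
  by rewrite le_eqVlt; apply/predU1P; left; field; rewrite gt_eqF.
nra.
Qed.

Lemma exp_neg_div_ge0 t s : 0 <= exp_neg_div t s.
Proof. by rewrite /exp_neg_div; case: ifP => // _; exact: expR_ge0. Qed.

Lemma exp_neg_div_le1 t s : 0 <= t -> 0 <= s -> exp_neg_div t s <= 1.
Proof.
move=> t_ge0 s_ge0; rewrite /exp_neg_div; case: ifP => // _.
by rewrite expR_le1 oppr_le0 divr_ge0.
Qed.

Lemma exp_neg_div_le_powR t s th : 0 < t -> 0 <= s -> 0 < th ->
  exp_neg_div t s <= (th * s / t) `^ th.
Proof.
rewrite /exp_neg_div => t_gt0 s_ge0 th_gt0; case: eqVneq => [_|s_neq0]; first exact: powR_ge0.
have s_gt0 : 0 < s by rewrite lt0r s_neq0.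
have z_gt0 : 0 < th * s / t by rewrite !mulr_gt0 ?invr_gt0.
have iz_gt0 : 0 < (th * s / t)^-1 by rewrite invr_gt0.
rewrite /powR gt_eqF // ler_expR.
(* [ln z < z] at [z = t / (th * s)] *)
have := ln_sublinear iz_gt0; rewrite lnV ?posrE // invf_div => ln_lt.
have -> : - (t / s) = th * - (t / (th * s)) by field; rewrite ?gt_eqF.
by rewrite ler_pM2l // lerNl ltW.
Qed.

End power_inequalities.

Section summation.
Variable R : comPzRingType.
Implicit Types S s G u w : nat -> R.

Lemma summation_by_parts S s G m M : (forall k, S k.+1 = S k + s k) -> (m <= M)%N ->
  \sum_(m <= k < M) S k.+1 * (G k - G k.+1) =
  S m * G m - S M * G M + \sum_(m <= k < M) s k * G k.
Proof.
move=> S_succ; elim: M => [|M IH].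
  by rewrite leqn0 => /eqP ->; rewrite !big_geq // subrr addr0.
rewrite leq_eqVlt => /orP[/eqP <-|mM]; first by rewrite !big_geq // subrr addr0.
by rewrite !big_nat_recr //= IH // S_succ; ring.
Qed.

Lemma exchange_triangular_sum w u m M :
  \sum_(m <= n < M) w n * \sum_(m <= k < n) u k =
  \sum_(m <= k < M) u k * \sum_(k.+1 <= n < M) w n.
Proof.
elim: M => [|M IH]; first by rewrite !big_geq.
have [mM|Mm] := leqP m M; last by rewrite !big_geq.
rewrite big_nat_recr //= IH [in RHS]big_nat_recr //= [in X in _ = _ + X]big_geq // mulr0 addr0.
rewrite mulr_sumr -big_split /=; apply: eq_big_nat => k /andP[_ kM].
by rewrite big_nat_recr //=; ring.
Qed.

End summation.

Lemma telescope_ler (R : numDomainType) (f g : nat -> R) m n : (m <= n)%N ->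
  (forall k, (m <= k < n)%N -> f k.+1 - f k <= g k) ->
  f n <= f m + \sum_(m <= k < n) g k.
Proof. by move=> mn fg; rewrite -lerBlDl -telescope_sumr //; exact: ler_sum_nat. Qed.

Section extended_real_sequences.
Variable R : realType.

Lemma limn_einf_gt0_lbound (f : nat -> nat -> R) :
  (0 < limn_einf (fun n => ereal_inf [set (f n k)%:E | k in [set k | (n <= k)%N]]))%E ->
  exists c, exists n0, 0 < c /\ forall n k, (n0 <= n)%N -> (n <= k)%N -> c <= f n k.
Proof.
set v := fun n => _; rewrite limn_einf_lim (cvg_lim _ (@cvg_einfs_sup _ v)) //.
move=> /ereal_sup_gt[_ [n0 _ <-] inf_gt0].
have [c [c_gt0 c_le]] : exists c, 0 < c /\ (c%:E <= einfs v n0)%E.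
  move: inf_gt0; case: (einfs v n0) => [r||] //= r_gt0; last by exists 1; rewrite leey.
  by exists r; rewrite -lte_fin.
exists c, n0; split=> // n k n0n nk; rewrite -lee_fin (le_trans c_le) //.
apply: le_trans (_ : v n <= _)%E; first by apply: ereal_inf_lbound; exists n.
by apply: ereal_inf_lbound; exists k.
Qed.

Lemma nneseries_partial_le (f : nat -> R) n M : (forall k, (n <= k)%N -> 0 <= f k) ->
  ((\sum_(n <= k < M) f k)%:E <= \sum_(n <= k <oo) (f k)%:E)%E.
Proof.
by move=> f_ge0; rewrite -sumEFin; apply: nneseries_lim_ge => k nk _; rewrite lee_fin f_ge0.
Qed.

End extended_real_sequences.

Definition ktau_sum {R : pzSemiRingType} (tau : nat -> R) n := \sum_(1 <= k < n) k%:R * tau k.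

Lemma ktau_sumS {R : pzSemiRingType} (tau : nat -> R) n :
  ktau_sum tau n.+1 = ktau_sum tau n + n%:R * tau n.
Proof.
case: n => [|n]; first by rewrite /ktau_sum !big_geq // mul0r addr0.
by rewrite /ktau_sum big_nat_recr.
Qed.

Lemma ktau_sum_ge0 {R : numDomainType} (tau : nat -> R) n :
  (forall k, (0 < k)%N -> 0 <= tau k) -> 0 <= ktau_sum tau n.
Proof.
move=> tau_ge0; rewrite /ktau_sum big_nat_cond sumr_ge0 // => k /andP[/andP[k_gt0 _] _].
by rewrite mulr_ge0 ?tau_ge0.
Qed.

Section deterministic_bound.
Variable R : realType.
Variables (tau b T G : nat -> R) (th C c L : R) (m : nat).
Hypotheses (m_gt0 : (0 < m)%N) (th_ge1 : 1 <= th) (C_ge0 : 0 <= C) (c_gt0 : 0 < c).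
Hypothesis tau_ge0 : forall n, (0 < n)%N -> 0 <= tau n.
Hypothesis b_gt0 : forall n, (0 < n)%N -> 0 < b n.
Hypotheses (T_ge0 : forall n, 0 <= T n) (G_ge0 : forall n, 0 <= G n).
Hypothesis T_nondecr : forall k, (m <= k)%N -> T k <= T k.+1.
Hypothesis G_nonincr : forall k, (m <= k)%N -> G k.+1 <= G k.
Hypothesis T_increment :
  forall k, (m <= k)%N -> T k.+1 - T k <= b k.+1 ^+ 2 * (G k - G k.+1).
Hypothesis weighted_G_bounded : forall M, \sum_(1 <= n < M) n%:R * tau n * G n <= L.
Hypothesis tail_cond : forall n M, (m <= n)%N ->
  b n `^ (2 * th) / n%:R `^ (th - 1) *
    \sum_(n <= k < M) (k%:R `^ th * tau k / b k `^ (2 * th)) <= C * ktau_sum tau n.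
Hypothesis growth_cond : forall n k, (m <= n)%N -> (n <= k)%N ->
  c <= b k ^+ 2 / (k%:R * b n ^+ 2) * ktau_sum tau n.

(* [T n] and [G n] stand for E[X^2; |X| < b n] and P(|X| >= b n); only the
   inequalities above are used. *)
Local Notation S := (ktau_sum tau).
Let Q := S m * G m + L.
Let K := (S m * T m / b m ^+ 2 + Q) / c.
Local Notation w k := (k%:R `^ th * tau k / b k `^ (2 * th)).
Local Notation W n := (C * S n * n%:R `^ (th - 1) / b n `^ (2 * th)).
Local Notation u k := (T k.+1 `^ (th - 1) * (T k.+1 - T k)).

Let th_gt0 : 0 < th. Proof. exact: lt_le_trans th_ge1. Qed.
Let S_ge0 n : 0 <= S n. Proof. exact: ktau_sum_ge0. Qed.
Let L_ge0 : 0 <= L. Proof. by have := weighted_G_bounded 0; rewrite big_geq. Qed.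
Let Q_ge0 : 0 <= Q. Proof. by rewrite /Q addr_ge0 ?mulr_ge0. Qed.
Let K_ge0 : 0 <= K.
Proof.
rewrite /K; apply: divr_ge0 (ltW c_gt0); apply: addr_ge0 => //.
by apply: divr_ge0; [exact: mulr_ge0|exact: sqr_ge0].
Qed.
Let G_diff_ge0 k : (m <= k)%N -> 0 <= G k - G k.+1.
Proof. by move=> mk; rewrite subr_ge0 G_nonincr. Qed.

Lemma by_parts_bound M : \sum_(m <= k < M) S k.+1 * (G k - G k.+1) <= Q.
Proof.
have [mM|Mm] := leqP m M; last by rewrite big_geq // ltnW.
rewrite (summation_by_parts G (ktau_sumS tau) mM).
have sum_le : \sum_(m <= k < M) k%:R * tau k * G k <= L.
  apply: le_trans (weighted_G_bounded M); rewrite (big_cat_nat m_gt0 mM) /= lerDr.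
  by rewrite big_nat_cond sumr_ge0 // => k /andP[/andP[k_gt0 _] _]; rewrite !mulr_ge0 ?tau_ge0.
have : 0 <= S M * G M by rewrite mulr_ge0.
rewrite /Q; lra.
Qed.

Lemma growth_bound j n : (m <= j)%N -> (j <= n)%N -> c * (n%:R * b j ^+ 2) <= b n ^+ 2 * S j.
Proof.
move=> mj jn; have j_gt0 := leq_trans m_gt0 mj.
have := growth_cond mj jn; rewrite mulrAC ler_pdivlMr //.
by rewrite mulr_gt0 ?exprn_gt0 ?b_gt0 // ltr0n (leq_trans j_gt0 jn).
Qed.

Lemma trunc_linear_bound n : (m <= n)%N -> n%:R * T n <= K * b n ^+ 2.
Proof.
move=> mn; have bm_gt0 : 0 < b m ^+ 2 by rewrite exprn_gt0 ?b_gt0.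
rewrite /K mulrAC ler_pdivlMr //.
have T_tel := telescope_ler mn (fun k kmn => T_increment (proj1 (andP kmn))).
apply: le_trans (ler_wpM2r (ltW c_gt0) (ler_wpM2l (ler0n _ n) T_tel)) _.
rewrite mulrDr mulrDl [_ * b n ^+ 2]mulrDl mulr_sumr mulr_suml; apply: lerD.
  have -> : n%:R * T m * c = c * (n%:R * b m ^+ 2) * (T m / b m ^+ 2).
    by field; rewrite gt_eqF ?b_gt0.
  apply: le_trans (ler_wpM2r (divr_ge0 (T_ge0 m) (ltW bm_gt0)) (growth_bound (leqnn m) mn)) _.
  by rewrite [in X in _ <= X]mulrC !mulrA.
apply: le_trans (_ : b n ^+ 2 * Q <= _); last by rewrite mulrC.
apply: le_trans (ler_wpM2l (sqr_ge0 (b n)) (by_parts_bound n)); rewrite mulr_sumr.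
apply: ler_sum_nat => k /andP[mk kn].
have -> : n%:R * (b k.+1 ^+ 2 * (G k - G k.+1)) * c =
          c * (n%:R * b k.+1 ^+ 2) * (G k - G k.+1) by ring.
rewrite [in X in _ <= X]mulrA ler_wpM2r ?G_diff_ge0 //.
exact: growth_bound (leq_trans mk (leqnSn k)) kn.
Qed.

Lemma tail_weight_bound n M : (m <= n)%N -> \sum_(n <= k < M) w k <= W n.
Proof.
move=> mn; have n_gt0 := leq_trans m_gt0 mn.
have bn_gt0 : 0 < b n `^ (2 * th) by rewrite powR_gt0 ?b_gt0.
have n_th_gt0 : 0 < n%:R `^ (th - 1) by rewrite powR_gt0 ?ltr0n.
rewrite -(ler_pM2l (divr_gt0 bn_gt0 n_th_gt0)); apply: le_trans (tail_cond M mn) _.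
by rewrite le_eqVlt; apply/predU1P; left; field; rewrite !gt_eqF.
Qed.

Lemma trunc_pow_bound n : (m <= n)%N ->
  T n `^ th <= T m `^ th + th * \sum_(m <= k < n) u k.
Proof.
move=> mn; rewrite mulr_sumr; apply: (telescope_ler (f := fun k => T k `^ th)) => // k /andP[mk _].
by rewrite mulrA powR_sub_le ?T_nondecr.
Qed.

Lemma increment_weight_bound k : (m <= k)%N ->
  u k * W k.+1 <= K `^ (th - 1) * C * (S k.+1 * (G k - G k.+1)).
Proof.
move=> mk; have b_sq_gt0 : 0 < b k.+1 ^+ 2 by rewrite exprn_gt0 ?b_gt0.
have th1_ge0 : 0 <= th - 1 by rewrite subr_ge0.
have T_le : T k.+1 <= K * b k.+1 ^+ 2 / k.+1%:R.
  by rewrite ler_pdivlMr // mulrC trunc_linear_bound // (leq_trans mk).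
have u_le : u k <= (K * b k.+1 ^+ 2 / k.+1%:R) `^ (th - 1) * (b k.+1 ^+ 2 * (G k - G k.+1)).
  rewrite ler_pM ?powR_ge0 ?subr_ge0 ?T_nondecr ?T_increment //.
  apply: ge0_ler_powR T_le; rewrite ?nnegrE //.
  exact: divr_ge0 (mulr_ge0 K_ge0 (sqr_ge0 _)) (ler0n _ _).
have W_ge0 : 0 <= W k.+1 by rewrite !mulr_ge0 ?invr_ge0 ?powR_ge0.
apply: le_trans (ler_wpM2r W_ge0 u_le) _.
have b_pow : (b k.+1 ^+ 2) `^ (th - 1) * b k.+1 ^+ 2 = b k.+1 `^ (2 * th).
  by rewrite mulrC mulr_powRB1 ?powR_sqr ?ltW ?b_gt0.
rewrite (powRM _ (mulr_ge0 K_ge0 (sqr_ge0 _))) ?invr_ge0 // powRV // powRM ?sqr_ge0 //.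
rewrite -b_pow le_eqVlt; apply/predU1P; left; field.
by rewrite !gt_eqF ?powR_gt0 ?exprn_gt0 ?b_gt0 ?ltr0n.
Qed.

Lemma weighted_pow_sum_bound M : (m <= M)%N ->
  \sum_(m <= n < M) w n * T n `^ th <= T m `^ th * W m + th * (K `^ (th - 1) * C * Q).
Proof.
move=> mM; have w_ge0 n : (m <= n)%N -> 0 <= w n.
  move=> mn; have n_gt0 := leq_trans m_gt0 mn.
  by rewrite !mulr_ge0 ?invr_ge0 ?powR_ge0 ?tau_ge0.
apply: le_trans (_ : \sum_(m <= n < M) w n * (T m `^ th + th * \sum_(m <= k < n) u k) <= _).
  by apply: ler_sum_nat => n /andP[mn _]; rewrite ler_wpM2l ?w_ge0 ?trunc_pow_bound.
under eq_bigr do rewrite mulrDr; rewrite big_split /= -mulr_suml; apply: lerD.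
  by rewrite mulrC ler_wpM2l ?powR_ge0 ?tail_weight_bound.
under eq_bigr do rewrite mulrCA; rewrite -mulr_sumr ler_wpM2l ?(ltW th_gt0) //.
rewrite exchange_triangular_sum.
have K'_ge0 : 0 <= K `^ (th - 1) * C by rewrite mulr_ge0 ?powR_ge0.
apply: le_trans (ler_wpM2l K'_ge0 (by_parts_bound M)); rewrite mulr_sumr.
apply: ler_sum_nat => k /andP[mk _]; apply: le_trans (increment_weight_bound mk).
have u_ge0 : 0 <= u k by rewrite mulr_ge0 ?powR_ge0 ?subr_ge0 ?T_nondecr.
by rewrite ler_wpM2l ?tail_weight_bound // (leq_trans mk).
Qed.

Lemma summand_bound n : (0 < n)%N ->
  tau n * exp_neg_div (b n ^+ 2) (n%:R * T n) <= th `^ th * (w n * T n `^ th).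
Proof.
move=> n_gt0; have b_sq_gt0 : 0 < b n ^+ 2 by rewrite exprn_gt0 ?b_gt0.
have nT_ge0 : 0 <= n%:R * T n by rewrite mulr_ge0.
apply: le_trans (ler_wpM2l (tau_ge0 n_gt0) (exp_neg_div_le_powR b_sq_gt0 nT_ge0 th_gt0)) _.
have th_nT_ge0 : 0 <= th * (n%:R * T n) by rewrite mulr_ge0 // ltW.
rewrite (powRM _ th_nT_ge0) ?invr_ge0 ?sqr_ge0 // powRV // (powRM _ (ltW th_gt0) nT_ge0).
rewrite (powRM _ (ler0n _ n) (T_ge0 n)) powR_sqr; last exact: ltW (b_gt0 n_gt0).
rewrite le_eqVlt; apply/predU1P; left; field.
by rewrite gt_eqF ?powR_gt0 ?b_gt0.
Qed.

Lemma exp_neg_div_sum_bounded : exists B, forall M, (m <= M)%N ->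
  \sum_(1 <= n < M) tau n * exp_neg_div (b n ^+ 2) (n%:R * T n) <= B.
Proof.
exists (\sum_(1 <= n < m) tau n + th `^ th * (T m `^ th * W m + th * (K `^ (th - 1) * C * Q))).
move=> M mM; rewrite (big_cat_nat m_gt0 mM) /=; apply: lerD.
  apply: ler_sum_nat => n /andP[n_gt0 _]; rewrite -[X in _ <= X]mulr1 ler_wpM2l ?tau_ge0 //.
  by rewrite exp_neg_div_le1 ?sqr_ge0 ?mulr_ge0.
apply: le_trans (_ : \sum_(m <= n < M) th `^ th * (w n * T n `^ th) <= _).
  by apply: ler_sum_nat => n /andP[mn _]; rewrite summand_bound // (leq_trans m_gt0 mn).
by rewrite -mulr_sumr ler_wpM2l ?powR_ge0 ?weighted_pow_sum_bound.
Qed.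

End deterministic_bound.

Lemma sqr_le_of_norm_lt (R : realDomainType) (y r : R) : `|y| < r -> y ^+ 2 <= r ^+ 2.
Proof. by move=> yr; rewrite -real_normK ?num_real //; have := normr_ge0 y; nra. Qed.

Section truncated_moments.
Variables (R : realType) (d : measure_display) (T : measurableType d).
Variables (P : probability T R) (X : {RV P >-> R}).

Definition tail_prob r := fine (P [set x | r <= `|X x|]).
(* For [r = eps * a n] this is [T_{eps,n}] of the statement. *)
Definition trunc_moment r := \int[P]_(x in [set x | `|X x| < r]) X x ^+ 2.

Let measurable_absX : measurable_fun setT (fun x => `|X x|).
Proof. exact: measurableT_comp (measurable_funP X). Qed.

Lemma measurable_abs_ge r : measurable [set x | r <= `|X x|].
Proof.
rewrite -preimage_itvcy -[_ @^-1` _]setTI.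
exact: measurable_absX measurableT _ (measurable_itv _).
Qed.

Lemma measurable_abs_lt r : measurable [set x | `|X x| < r].
Proof.
rewrite -preimage_itvNyo -[_ @^-1` _]setTI.
exact: measurable_absX measurableT _ (measurable_itv _).
Qed.

Local Hint Resolve measurable_abs_ge measurable_abs_lt : core.

Lemma tail_probE r : P [set x | r <= `|X x|] = (tail_prob r)%:E.
Proof. by rewrite fineK // fin_num_measure. Qed.

Lemma tail_prob_ge0 r : 0 <= tail_prob r.
Proof. exact/fine_ge0/measure_ge0. Qed.

Lemma tail_prob_nonincr r r' : r <= r' -> tail_prob r' <= tail_prob r.
Proof.
move=> rr'; rewrite -lee_fin -!tail_probE.
by apply: le_measure; rewrite ?inE // => x /= /(le_trans rr').
Qed.

Lemma trunc_moment_ge0 r : 0 <= trunc_moment r.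
Proof. by apply: Rintegral_ge0 => x _; exact: sqr_ge0. Qed.

Lemma integrable_sqr_abs_lt r E : measurable E -> E `<=` [set x | `|X x| < r] ->
  P.-integrable E (EFin \o (fun x => X x ^+ 2)).
Proof.
move=> mE Er; apply: (le_integrable mE _ _ (finite_measure_integrable_cst P (r ^+ 2) mE)).
  by apply/measurable_EFinP; apply: measurable_funX; exact: measurable_funTS (measurable_funP X).
move=> x /Er /= xr; rewrite lee_fin !ger0_norm ?sqr_ge0 //.
exact: sqr_le_of_norm_lt.
Qed.

Lemma trunc_momentD r r' : r <= r' -> trunc_moment r' =
  trunc_moment r + \int[P]_(x in [set x | r <= `|X x|] `\` [set x | r' <= `|X x|]) X x ^+ 2.
Proof.
move=> rr'; set A := _ `\` _.
have mA : measurable A by exact: measurableD.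
have splitD : [set x | `|X x| < r'] = [set x | `|X x| < r] `|` A.
  apply/seteqP; split=> x /=.
    move=> xr'; have [xr|rx] := ltP `|X x| r; [by left|right; split=> //].
    by apply/negP; rewrite -ltNge.
  by case=> [xr|[_ /negP]]; [exact: lt_le_trans rr'|rewrite -ltNge].
rewrite /trunc_moment [in LHS]splitD Rintegral_setU //.
  by rewrite -splitD; exact: (integrable_sqr_abs_lt (r := r')).
by apply/disj_setPS => x [/= xr [/= rx _]]; move: (lt_le_trans xr rx); rewrite ltxx.
Qed.

Lemma trunc_moment_nondecr r r' : r <= r' -> trunc_moment r <= trunc_moment r'.
Proof.
by move=> rr'; rewrite (trunc_momentD rr') lerDl; apply: Rintegral_ge0 => x _; exact: sqr_ge0.
Qed.

Lemma trunc_moment_increment r r' : r <= r' ->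
  trunc_moment r' - trunc_moment r <= r' ^+ 2 * (tail_prob r - tail_prob r').
Proof.
move=> rr'; rewrite (trunc_momentD rr') addrC addKr; set A := _ `\` _.
have mA : measurable A by exact: measurableD.
have A_lt : A `<=` [set x | `|X x| < r'] by move=> x [_ /negP]; rewrite /= -ltNge.
have PA : fine (P A) = tail_prob r - tail_prob r'.
  have sub : [set x | r' <= `|X x|] `<=` [set x | r <= `|X x|] by move=> x /= /(le_trans rr').
  rewrite /tail_prob -fineB ?fin_num_measure ?measureD ?(setIidr sub) //.
  by rewrite -ge0_fin_numE ?measure_ge0 ?fin_num_measure.
rewrite -PA -Rintegral_cst //; apply: le_Rintegral => //.
- exact: integrable_sqr_abs_lt A_lt.
- exact: finite_measure_integrable_cst.
- by move=> x /A_lt; exact: sqr_le_of_norm_lt.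
Qed.

Lemma weighted_tail_prob_bounded (tau b : nat -> R) : (forall n, (1 <= n)%N -> 0 <= tau n) ->
  (\sum_(1 <= n <oo) ((n%:R * tau n)%:E * P [set x | (b n <= `|X x|)%R]) < +oo)%E ->
  exists L, forall M, \sum_(1 <= n < M) n%:R * tau n * tail_prob (b n) <= L.
Proof.
move=> tau_ge0 sum_lt; set f := fun n => n%:R * tau n * tail_prob (b n).
have f_ge0 n : (1 <= n)%N -> 0 <= f n by move=> n_gt0; rewrite !mulr_ge0 ?tau_ge0 ?tail_prob_ge0.
have sum_fin : (\sum_(1 <= n <oo) (f n)%:E)%E \is a fin_num.
  rewrite ge0_fin_numE; last by apply: nneseries_ge0 => n n_gt0 _; rewrite lee_fin f_ge0.
  by under eq_eseriesr do rewrite EFinM -tail_probE.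
exists (fine (\sum_(1 <= n <oo) (f n)%:E)%E) => M.
by rewrite -lee_fin fineK // nneseries_partial_le.
Qed.

End truncated_moments.

Section sequence_conditions.
Variable R : realType.

Lemma scaled_tail_cond (tau a : nat -> R) th C eps N n M : 0 < eps -> (0 < N)%N ->
  (forall k, (1 <= k)%N -> 0 <= tau k) -> (forall k, (1 <= k)%N -> 0 < a k) ->
  (forall n, (N <= n)%N ->
     ((a n `^ (2 * th) / n%:R `^ (th - 1))%:E *
        \sum_(n <= k <oo) ((k%:R `^ th * tau k / a k `^ (2 * th))%:E)
      <= (C * \sum_(1 <= k < n) k%:R * tau k)%:E)%E) ->
  (N <= n)%N ->
  (eps * a n) `^ (2 * th) / n%:R `^ (th - 1) *
    \sum_(n <= k < M) (k%:R `^ th * tau k / (eps * a k) `^ (2 * th)) <= C * ktau_sum tau n.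
Proof.
move=> eps_gt0 N_gt0 tau_ge0 a_gt0 tail_le Nn; have n_gt0 := leq_trans N_gt0 Nn.
have a_ge0 k : (n <= k)%N -> 0 <= a k by move=> nk; exact/ltW/a_gt0/(leq_trans n_gt0 nk).
apply: le_trans (_ : a n `^ (2 * th) / n%:R `^ (th - 1) *
    \sum_(n <= k < M) (k%:R `^ th * tau k / a k `^ (2 * th)) <= _).
  rewrite (powRM _ (ltW eps_gt0) (a_ge0 n (leqnn n))).
  under eq_big_nat => k /andP[nk _] do rewrite (powRM _ (ltW eps_gt0) (a_ge0 k nk)) invfM mulrCA.
  rewrite -mulr_sumr le_eqVlt; apply/predU1P; left; field.
  by rewrite !gt_eqF ?powR_gt0 ?ltr0n ?a_gt0.
rewrite /ktau_sum -lee_fin EFinM; apply: le_trans (tail_le n Nn).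
apply: lee_wpmul2l; first by rewrite lee_fin divr_ge0 ?powR_ge0.
apply: nneseries_partial_le => k nk; have k_gt0 := leq_trans n_gt0 nk.
by rewrite !mulr_ge0 ?invr_ge0 ?powR_ge0 ?tau_ge0.
Qed.

Lemma scaled_growth_ratio (a : nat -> R) eps n k : 0 < eps -> 0 < a n -> (0 < k)%N ->
  (eps * a k) ^+ 2 / (k%:R * (eps * a n) ^+ 2) = a k ^+ 2 / (k%:R * a n ^+ 2).
Proof. by move=> eps_gt0 an_gt0 k_gt0; rewrite !exprMn; field; rewrite !gt_eqF ?ltr0n. Qed.

End sequence_conditions.

Theorem theorem2 (R : realType) (tau a : nat -> R) (theta C : R) (N : nat)
  (tau_ge0 : forall n, (1 <= n)%N -> 0 <= tau n)
  (a_gt0 : forall n, (1 <= n)%N -> 0 < a n)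
  (a_nondecr : forall n m, (1 <= n)%N -> (n <= m)%N -> a n <= a m)
  (theta_ge1 : 1 <= theta) (C_gt0 : 0 < C) (N_ge2 : (2 <= N)%N)
  (H1 : forall n, (N <= n)%N ->
     ((a n `^ (2 * theta) / (n%:R `^ (theta - 1)))%:E *
        (\sum_(n <= k <oo) ((k%:R `^ theta * tau k / a k `^ (2 * theta))%:E))
      <= (C * \sum_(1 <= k < n) (k%:R * tau k))%:E)%E)
  (H2 : (0 < limn_einf (fun n =>
            ereal_inf [set ((a k ^+ 2 / (k%:R * a n ^+ 2)) *
                            \sum_(1 <= j < n) (j%:R * tau j))%:E
                      | k in [set k : nat | (n <= k)%N]]))%E) :
  forall (d : measure_display) (T : measurableType d) (P : probability T R)
         (X : {RV P >-> R}),
    (forall eps : R, 0 < eps ->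
       (\sum_(1 <= n <oo) ((n%:R * tau n)%:E * P [set x | (eps * a n <= `|X x|)%R])
          < +oo)%E) ->
    forall eps : R, 0 < eps ->
      (\sum_(1 <= n <oo)
          (tau n * exp_neg_div (eps ^+ 2 * a n ^+ 2)
             (n%:R * fine (\int[P]_(x in [set x | (`|X x| < eps * a n)%R]) ((X x) ^+ 2)%:E)))%:E
        < +oo)%E.
Proof.
move=> d T P X hX eps eps_gt0.
have [c [n0 [c_gt0 hc]]] := limn_einf_gt0_lbound H2.
have [L L_bound] := weighted_tail_prob_bounded tau_ge0 (hX eps eps_gt0).
pose m := maxn N n0; pose b n := eps * a n.
have N_gt0 : (0 < N)%N := ltnW N_ge2.
have m_gt0 : (0 < m)%N := leq_trans N_gt0 (leq_maxl N n0).
have b_gt0 n : (0 < n)%N -> 0 < b n by move=> n_gt0; rewrite mulr_gt0 ?a_gt0.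
have b_nondecr k : (m <= k)%N -> b k <= b k.+1.
  by move=> mk; rewrite ler_wpM2l ?(ltW eps_gt0) ?a_nondecr // (leq_trans m_gt0 mk).
have tail_cond n M (mn : (m <= n)%N) :=
  scaled_tail_cond M eps_gt0 N_gt0 tau_ge0 a_gt0 H1 (leq_trans (leq_maxl N n0) mn).
have growth_cond n k : (m <= n)%N -> (n <= k)%N ->
    c <= b k ^+ 2 / (k%:R * b n ^+ 2) * ktau_sum tau n.
  move=> mn nk; have n_gt0 := leq_trans m_gt0 mn.
  by rewrite scaled_growth_ratio ?a_gt0 ?(leq_trans n_gt0) // hc // (leq_trans (leq_maxr N n0)).
have [B sum_le] := exp_neg_div_sum_bounded (T := fun n => trunc_moment X (b n))
  (G := fun n => tail_prob X (b n)) m_gt0 theta_ge1 (ltW C_gt0) c_gt0 tau_ge0 b_gt0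
  (fun n => trunc_moment_ge0 X (b n)) (fun n => tail_prob_ge0 X (b n))
  (fun k mk => trunc_moment_nondecr X (b_nondecr k mk))
  (fun k mk => tail_prob_nonincr X (b_nondecr k mk))
  (fun k mk => trunc_moment_increment X (b_nondecr k mk)) L_bound tail_cond growth_cond.
apply: (@le_lt_trans _ _ B%:E); last exact: ltry.
apply: lime_le.
  by apply: is_cvg_nneseries => n n_gt0 _; rewrite lee_fin mulr_ge0 ?tau_ge0 ?exp_neg_div_ge0.
near=> M; rewrite sumEFin lee_fin; under eq_bigr do rewrite -exprMn.
by apply: sum_le; near: M; exact: nbhs_infty_ge.
Unshelve. all: by end_near.
Qed.
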